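(* Let $\{X_n\}_{n=-\infty}^{\infty}$ be a stationary and ergodic time series taking values in a finite alphabet $\mathcal{X}$. Let $K_n\ge1$ and $J_n\ge1$ be nondecreasing sequences of positive integers with $K_n\to\infty$, $J_n\to\infty$ and $\lim_{n\to\infty}J_n/n=0$. Then $\lim_{n\to\infty}\kappa_n=\infty$ almost surely.
   Context: Notation: $X_m^n=(X_m,\dots,X_n)$. For $k\ge1$ and $n\ge0$, $\tau^k_0(n)=0$ and for $i\ge1$, $\tau^k_i(n)=\min\{t>\tau^k_{i-1}(n): X_{n-k+1-t}^{n-t}=X_{n-k+1}^n\}$. Define $\kappa_n=\max\{1\le k\le K_n:\tau^k_{J_n}(n)\le n-k+1\}$ if such a $k$ exists, and $\kappa_n=0$ otherwise; i.e. $\kappa_n$ is the largest $k\le K_n$ such that the block $X_{n-k+1}^n$ has at least $J_n$ earlier occurrences within the data segment $X_0^n$. *)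

From HB Require Import structures.
From mathcomp Require Import all_boot all_order all_algebra.
From mathcomp Require Import all_classical all_reals all_analysis.
Set Implicit Arguments. Unset Strict Implicit. Unset Printing Implicit Defensive.
Import Order.TTheory GRing.Theory Num.Theory.
Local Open Scope classical_set_scope.
Local Open Scope ring_scope.

Section Defs.
Variable A : finType.

Definition cyl (ts : seq int) (s : seq A) : set (int -> A) :=
  [set x | all2 (fun t a => x t == a) ts s].

Definition cylinders : set (set (int -> A)) :=
  [set C | exists ts s, C = cyl ts s].

Definition path_measurable (B : set (int -> A)) : Prop := <<s cylinders >> B.

Definition shift (x : int -> A) : int -> A := fun t => x (t + 1).

Definition path_of (T : Type) (X : int -> T -> A) (w : T) : int -> A :=
  fun t => X t w.

Definition stationary d (T : measurableType d) (R : realType)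
  (P : probability T R) (X : int -> T -> A) : Prop :=
  forall (ts : seq int) (s : seq A) (m : int),
    P (path_of X @^-1` cyl ts s) =
    P (path_of X @^-1` cyl [seq t + m | t <- ts] s).

Definition ergodic d (T : measurableType d) (R : realType)
  (P : probability T R) (X : int -> T -> A) : Prop :=
  forall B : set (int -> A), path_measurable B -> shift @^-1` B = B ->
    P (path_of X @^-1` B) = 0%E \/ P (path_of X @^-1` B) = 1%E.

Definition block_match (x : int -> A) (n k t : nat) : bool :=
  [forall i : 'I_k,
     x (n%:Z - k%:Z + 1 + i%:Z - t%:Z) == x (n%:Z - k%:Z + 1 + i%:Z)].

(* Number of earlier occurrences of x_{n-k+1}^n lying within x_0^n:
   lags t with 1 <= t <= n-k+1, i.e. tau^k_j(n) <= n-k+1. *)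
Definition occ_count (x : int -> A) (n k : nat) : nat :=
  \sum_(1 <= t < (n + 2 - k)%N) block_match x n k t.

(* kappa_n: largest 1 <= k <= K_n with at least J_n earlier occurrences
   (tau^k_{J_n}(n) <= n-k+1), and 0 if none. *)
Definition kappa (K J : nat -> nat) (x : int -> A) (n : nat) : nat :=
  \max_(k < (K n).+1 | (1 <= k)%N && (J n <= occ_count x n k)%N) k.

End Defs.

From Pilot Require Import Defs.
From HB Require Import structures.
From mathcomp Require Import all_boot all_order all_algebra.
From mathcomp Require Import all_classical all_reals all_analysis.
From mathcomp Require Import measurable_realfun.
From mathcomp Require Import zify lra.
Import Order.TTheory GRing.Theory Num.Theory.
Local Open Scope classical_set_scope.
Local Open Scope ring_scope.
Set Implicit Arguments. Unset Strict Implicit. Unset Printing Implicit Defensive.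

(* Fix a block b of length k and let p be the probability that b occurs at time 0.
   If p > 0, pick c with c p > 8. The event "from some start j, b has frequency below
   1/c in [j, j + n) for infinitely many n" is shift invariant, so it has probability
   0 or 1. Were it 1, then for N large the window [0, n) would be sparse for some
   0 < n <= N with probability close to 1. Greedily covering [0, M) by sparse windows
   and by the points starting none bounds the expected number M p of occurrences by
   2 (M + N) / c + M P(no sparse window at 0), which is too small. Hence almost surely
   every block either never occurs at a nonnegative time or occurs with positive lower
   frequency, so by J_n = o(n) the block X_{n-k+1}^n has J_n earlier occurrences for
   all large n; as there are finitely many blocks of each length and K_n -> oo,
   kappa_n -> oo. *)

Section WindowCount.
Local Open Scope nat_scope.
Implicit Types (f g : int -> bool) (i : int).

Definition window_count f i n := \sum_(l < n) f (i + l%:Z)%R.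

Lemma window_countD f i m n :
  window_count f i (m + n) = window_count f i m + window_count f (i + m%:Z)%R n.
Proof.
rewrite /window_count big_split_ord /=; congr (_ + _).
by apply: eq_bigr => l _; rewrite PoszD addrA.
Qed.

Lemma window_count_le f i n : window_count f i n <= n.
Proof.
rewrite -[leqRHS]card_ord -sum1_card.
by apply: leq_sum => l _; case: (f _).
Qed.

Lemma window_count_shift f (m : int) i n :
  window_count (fun j => f (j + m)%R) i n = window_count f (i + m)%R n.
Proof. by apply: eq_bigr => l _; rewrite addrAC. Qed.

Lemma eq_window_count f g i n : (forall l, l < n -> f (i + l%:Z)%R = g (i + l%:Z)%R) ->
  window_count f i n = window_count g i n.
Proof. by move=> efg; apply: eq_bigr => l _; rewrite efg. Qed.

(* The factor 2 leaves room to move the start of a sparse window to 0, see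
   [infrequent_sparse_start]. *)
Definition sparse_start f N c i :=
  [exists n : 'I_N.+1, (0 < n) && (c * window_count f i n < 2 * n)].

Lemma eq_sparse_start f g N c i :
  (forall l, l < N -> f (i + l%:Z)%R = g (i + l%:Z)%R) ->
  sparse_start f N c i = sparse_start g N c i.
Proof.
move=> efg; apply: eq_existsb => n; rewrite (@eq_window_count f g) // => l ln.
by apply: efg; have := ltn_ord n; lia.
Qed.

Lemma sparse_start_shift f (m : int) N c i :
  sparse_start (fun j => f (j + m)%R) N c i = sparse_start f N c (i + m)%R.
Proof. by apply: eq_existsb => n; rewrite window_count_shift. Qed.

Lemma sparse_start_le f N N' c i : N <= N' ->
  sparse_start f N c i -> sparse_start f N' c i.
Proof.
move=> NN' /existsP[n nP]; apply/existsP.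
by exists (widen_ord (leq_ltn_trans NN' (ltnSn N')) n).
Qed.

(* Greedily cover [i, i + M) by sparse windows and single points that start no
   sparse window; the last window may stick out by at most N. *)
Lemma sparse_covering f N c M i :
  c * window_count f i M <=
  2 * (M + N) + c * window_count (fun j => ~~ sparse_start f N c j) i M.
Proof.
set bad := fun j => ~~ sparse_start f N c j.
elim/ltn_ind: M i => -[_ i|M IH i]; first by rewrite /window_count big_ord0 muln0.
have [/existsP[n /andP[n_gt0 sparse_n]]|bad_i] := boolP (sparse_start f N c i).
  have n_le_N : n <= N by have := ltn_ord n; lia.
  have [Mn|nM] := leqP M.+1 n.
    have : c * window_count f i M.+1 <= c * window_count f i n.
      by rewrite leq_mul2l -(subnKC Mn) window_countD leq_addr orbT.
    lia.
  rewrite -(subnKC (ltnW nM)) !window_countD !mulnDr.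
  have := IH (M.+1 - n) ltac:(lia) (i + n%:Z)%R; lia.
rewrite -add1n !window_countD !mulnDr.
have : c * window_count f i 1 <= c by rewrite -[leqRHS]muln1 leq_mul2l window_count_le orbT.
have -> : window_count bad i 1 = 1 by rewrite /window_count big_ord1 addr0 /bad bad_i.
have := IH M (ltnSn M) (i + 1%:Z)%R; lia.
Qed.

(* Quantifying over the start j makes this property shift invariant. *)
Definition infrequent f c :=
  exists j : int, forall N, exists2 n, N <= n & c * window_count f j n < n.

Lemma infrequent_shift f (m : int) c :
  infrequent (fun j => f (j + m)%R) c <-> infrequent f c.
Proof.
split=> -[j jP].
  by exists (j + m)%R => N; have [n Nn] := jP N; exists n; rewrite -?window_count_shift.
exists (j - m)%R => N; have [n Nn] := jP N.
by exists n; rewrite // window_count_shift subrK.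
Qed.

Lemma infrequent_sparse_start f c : infrequent f c -> exists N, sparse_start f N c 0.
Proof.
case=> -[m|m] jP.
  have [n le_cm_n sparse_n] := jP (c * m).
  exists (m + n); apply/existsP; exists (Ordinal (ltnSn (m + n))) => /=.
  have := window_countD f 0 m n; have := window_count_le f 0 m; rewrite add0r => le_m ->.
  have : c * window_count f 0 m <= c * m by rewrite leq_mul2l le_m orbT.
  rewrite mulnDr => le_cm; apply/andP; split; lia.
have [n le_2m_n] := jP (2 * m.+1); rewrite NegzE => sparse_n.
exists (n - m.+1); apply/existsP; exists (Ordinal (ltnSn (n - m.+1))) => /=.
have := window_countD f (- m.+1%:Z)%R m.+1 (n - m.+1).
rewrite subnKC ?addNr; last by lia.
move=> split_n; have : c * window_count f 0 (n - m.+1) <= c * window_count f (- m.+1%:Z)%R n.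
  by rewrite leq_mul2l split_n leq_addl orbT.
move=> le_cnt; apply/andP; split; lia.
Qed.

Definition absent_or_dense (f : int -> bool) :=
  (forall i : nat, ~~ f i) \/
  exists c N, forall n, N <= n -> n <= c * window_count f 0 n.

Lemma not_infrequent_dense f c : ~ infrequent f c ->
  exists N, forall n, N <= n -> n <= c * window_count f 0 n.
Proof.
move=> not_inf; apply: contrapT => no_N; apply: not_inf; exists 0 => N.
have /existsNP[n /not_implyP[Nn /negP]] :
    ~ forall n, N <= n -> n <= c * window_count f 0 n.
  by move=> dense; apply: no_N; exists N.
by rewrite -ltnNge; exists n.
Qed.

Lemma dense_hits_eventually (J : nat -> nat) f k :
  (forall c, exists N, forall n, N <= n -> J n * c <= n) -> absent_or_dense f ->
  exists N, forall n, N <= n -> f (n.+1 - k)%:Z -> J n <= window_count f 0 (n.+1 - k).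
Proof.
move=> J_sublin [absent|[c [N0 dense]]].
  by exists 0 => n _; rewrite (negbTE (absent _)).
have [N1 J_N1] := J_sublin (2 * c).
exists (N0 + N1 + 2 * k + 1) => n Nn _.
have := dense (n.+1 - k) ltac:(lia); have := J_N1 n ltac:(lia).
have [->|c_gt0] := posnP c; first by rewrite !mul0n; lia.
by move=> J_le dense_n; rewrite -(leq_pmul2l c_gt0); lia.
Qed.

End WindowCount.

Section PathSpace.
Variable A : finType.
Implicit Types (ts : seq int) (S : set (int -> A)).

Definition determined_by ts S := forall x y, {in ts, x =1 y} -> S x -> S y.

Definition traces ts S : set (seq A) := [set map x ts | x in S].

Lemma cylE ts (s : seq A) x : cyl ts s x <-> map x ts = s.
Proof.
rewrite /cyl /=; elim: ts s => [|t ts IH] [|a s] //=.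
by split => [/andP[/eqP -> /IH ->] //|[<- /IH]]; rewrite eqxx.
Qed.

Lemma cyl_shift ts (s : seq A) (m : int) x :
  cyl ts s (fun t => x (t + m)) <-> cyl [seq t + m | t <- ts] s x.
Proof. by rewrite !cylE -map_comp. Qed.

Lemma finite_traces ts S : finite_set (traces ts S).
Proof.
have fin_tuples := @finite_finset _ [set: (size ts).-tuple A].
apply: sub_finite_set (finite_image val fin_tuples).
by move=> _ [x _ <-]; exists (map_tuple x (in_tuple ts)).
Qed.

Lemma determinedE ts S : determined_by ts S -> S = \bigcup_(s in traces ts S) cyl ts s.
Proof.
move=> detS; apply/seteqP; split => [x Sx | x [_ [y Sy <-] /cylE yx]].
  by exists (map x ts); [exists x | apply/cylE].
by apply: detS Sy; apply/eq_in_map.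
Qed.

Lemma path_measurable_setC S : path_measurable S -> path_measurable (~` S).
Proof. by move=> mS; rewrite -setTD; exact: (@sigma_algebraCD _ setT). Qed.

Lemma path_measurable_bigcap (F : nat -> set (int -> A)) :
  (forall n, path_measurable (F n)) -> path_measurable (\bigcap_n F n).
Proof.
move=> mF; rewrite -[X in path_measurable X]setCK setC_bigcap.
apply: path_measurable_setC; apply: (@sigma_algebra_bigcup _ setT) => n.
exact: path_measurable_setC.
Qed.

Lemma path_measurable_setU S1 S2 :
  path_measurable S1 -> path_measurable S2 -> path_measurable (S1 `|` S2).
Proof.
move=> m1 m2; have -> : S1 `|` S2 = \bigcup_n (if n is 0 then S1 else S2).
  apply/seteqP; split=> [x [] ?|x [[|n] _ ?]]; by [exists 0%N|exists 1%N|left|right].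
by apply: (@sigma_algebra_bigcup _ setT) => -[].
Qed.

Lemma path_measurable_bigcup_int (F : int -> set (int -> A)) :
  (forall i, path_measurable (F i)) -> path_measurable (\bigcup_i F i).
Proof.
move=> mF; have -> : \bigcup_i F i = \bigcup_n (F (Posz n) `|` F (Negz n)).
  apply/seteqP; split=> [x [[n|n] _ ?]|x [n _ [?|?]]];
    by [exists n => //; left|exists n => //; right|exists (Posz n)|exists (Negz n)].
by apply: (@sigma_algebra_bigcup _ setT) => n; exact: path_measurable_setU.
Qed.

Lemma path_measurable_determined ts S : determined_by ts S -> path_measurable S.
Proof.
move=> /determinedE ->; have [X ->] := finite_fsetP.1 (finite_traces ts S).
rewrite bigcup_fset; elim/big_ind: _ => //; first exact: (@sigma_algebra0 _ setT).
  exact: path_measurable_setU.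
by move=> s _; apply: sub_sigma_algebra; exists ts, s.
Qed.

End PathSpace.

Section Stationarity.
Variables (R : realType) (d : measure_display) (T : measurableType d)
  (P : probability T R) (A : finType) (X : int -> T -> A).
Hypothesis mX : forall (t : int) (a : A), measurable [set w | X t w = a].
Implicit Types (ts : seq int) (S : set (int -> A)).

Local Notation path := (path_of X).

Lemma measurable_cyl ts (s : seq A) : measurable (path @^-1` cyl ts s).
Proof.
elim: ts s => [|t ts IH] [|a s].
- rewrite [E in measurable E](_ : _ = setT); first exact: measurableT.
  by apply/seteqP; split=> // w _; apply/cylE.
- rewrite [E in measurable E](_ : _ = set0); first exact: measurable0.
  by apply/seteqP; split=> // w /cylE.
- rewrite [E in measurable E](_ : _ = set0); first exact: measurable0.
  by apply/seteqP; split=> // w /cylE.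
- rewrite [E in measurable E](_ : _ = [set w | X t w = a] `&` path @^-1` cyl ts s).
    exact: measurableI.
  apply/seteqP; split=> w; rewrite /= /cyl /= /path_of; first by case/andP=> /eqP.
  by case=> -> ->; rewrite eqxx.
Qed.

Lemma measurable_path_preimage (B : set (int -> A)) :
  path_measurable B -> measurable (path @^-1` B).
Proof.
apply: (smallest_sub (X := [set B | measurable (path @^-1` B)])).
  split => [|C /= mC|F /= mF]; first exact: measurable0.
    by rewrite setTD -preimage_setC; exact: measurableC.
  by rewrite preimage_bigcup; exact: bigcupT_measurable.
by move=> _ [ts [s ->]]; exact: measurable_cyl.
Qed.

Lemma measurable_determined ts S : determined_by ts S -> measurable (path @^-1` S).
Proof. by move=> /path_measurable_determined; exact: measurable_path_preimage. Qed.

Lemma measure_bigcup_cyl ts (D : set (seq A)) : finite_set D ->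
  P (path @^-1` \bigcup_(s in D) cyl ts s) = (\sum_(s \in D) P (path @^-1` cyl ts s))%E.
Proof.
move=> finD; rewrite preimage_bigcup -fsbig_setU // measure_fsbig //.
  by move=> s _; exact: measurable_cyl.
by move=> s s' _ _ [w [/cylE <- /cylE <-]].
Qed.

Hypothesis stat : stationary P X.

Lemma stationary_determined ts S (m : int) : determined_by ts S ->
  P (path @^-1` [set x | S (fun t => x (t + m))]) = P (path @^-1` S).
Proof.
move=> /determinedE eS; have finD := finite_traces ts S; set D := traces ts S in eS finD.
have -> : [set x | S (fun t => x (t + m))] = \bigcup_(s in D) cyl [seq t + m | t <- ts] s.
  rewrite eS; apply/seteqP; split=> x [s Ds xs]; exists s => //.
    exact: (cyl_shift ts s m x).1.
  exact: (cyl_shift ts s m x).2.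
rewrite eS !measure_bigcup_cyl //.
by apply: eq_fsbigr => s _; rewrite (stat ts s m).
Qed.

End Stationarity.

Section Occurrences.
Variables (A : finType) (k : nat) (b : k.-tuple A).
Implicit Types (x y : int -> A) (i : int).

Definition occurs_at x i := [forall j : 'I_k, x (i + j%:Z) == tnth b j].

Definition window i (L : nat) : seq int := [seq i + l%:Z | l <- iota 0 L].

Lemma occurs_at_shift x (m : int) :
  occurs_at (fun t => x (t + m)) = fun i => occurs_at x (i + m).
Proof. by apply/funext => i; apply: eq_forallb => j; rewrite addrAC. Qed.

Lemma occurs_at_local x y i : {in window i k, x =1 y} -> occurs_at x i = occurs_at y i.
Proof.
move=> exy; apply: eq_forallb => j; rewrite exy //.
by apply: map_f; rewrite mem_iota /=.
Qed.

Lemma occurs_at_window x y i (n : nat) : {in window i (n + k), x =1 y} ->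
  forall l : nat, (l < n)%N -> occurs_at x (i + l%:Z) = occurs_at y (i + l%:Z).
Proof.
move=> exy l ln; apply: occurs_at_local => t /mapP[j]; rewrite mem_iota => /andP[_ jk] ->.
by rewrite -addrA -PoszD; apply/exy/map_f; rewrite mem_iota; lia.
Qed.

Lemma determined_occurs_at i : determined_by (window i k) [set x | occurs_at x i].
Proof. by move=> x y /occurs_at_local /= ->. Qed.

Lemma determined_window_count i n (Q : nat -> Prop) :
  determined_by (window i (n + k)) [set x | Q (window_count (occurs_at x) i n)].
Proof. by move=> x y exy /=; rewrite (eq_window_count (occurs_at_window exy)). Qed.

Lemma determined_sparse_start i N c (Q : bool -> Prop) :
  determined_by (window i (N + k)) [set x | Q (sparse_start (occurs_at x) N c i)].
Proof. by move=> x y exy /=; rewrite (eq_sparse_start c (occurs_at_window exy)). Qed.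

Lemma path_measurable_infrequent c :
  path_measurable [set x | infrequent (occurs_at x) c].
Proof.
have -> : [set x | infrequent (occurs_at x) c] = \bigcup_j \bigcap_N \bigcup_n
    [set x | (N <= n)%N /\ (c * window_count (occurs_at x) j n < n)%N].
  apply/seteqP; split=> x.
    by case=> j jP; exists j => // N _; have [n] := jP N; exists n.
  by case=> j _ jP; exists j => N; have [n _ []] := jP N I; exists n.
apply: path_measurable_bigcup_int => j; apply: path_measurable_bigcap => N.
apply: (@sigma_algebra_bigcup _ setT) => n.
apply: path_measurable_determined.
exact: (@determined_window_count j n (fun v => (N <= n)%N /\ (c * v < n)%N)).
Qed.

Lemma shift_infrequent c :
  @Defs.shift A @^-1` [set x | infrequent (occurs_at x) c] =
  [set x | infrequent (occurs_at x) c].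
Proof.
by apply/seteqP; split=> x; rewrite /= /Defs.shift occurs_at_shift infrequent_shift.
Qed.

End Occurrences.

Lemma indic_bool (T : Type) (R : realType) (Q : T -> bool) w :
  \1_[set w | Q w] w = (Q w)%:R :> R.
Proof.
rewrite indicE; case: (boolP (Q w)) => Qw; first by rewrite mem_set.
by rewrite memNset //=; apply/negP.
Qed.

Lemma sum_indic_window_count (T : Type) (R : realType) (F : T -> int -> bool) M w :
  \sum_(i < M) \1_[set w | F w i%:Z] w = (window_count (F w) 0 M)%:R :> R.
Proof. by rewrite natr_sum; apply: eq_bigr => i _; rewrite indic_bool add0r. Qed.

Section IndicatorSums.
Variables (R : realType) (d : measure_display) (T : measurableType d)
  (P : probability T R).

Lemma measurable_sum_indic (M : nat) (E : nat -> set T) :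
  (forall i, measurable (E i)) ->
  measurable_fun setT (fun w => (\sum_(i < M) \1_(E i) w : R)).
Proof. by move=> mE; apply: measurable_sum => i; exact: measurable_indic. Qed.

Lemma integral_sum_indic (M : nat) (E : nat -> set T) :
  (forall i, measurable (E i)) ->
  (\int[P]_w (\sum_(i < M) \1_(E i) w)%:E = (\sum_(i < M) fine (P (E i)))%:E)%E.
Proof.
move=> mE; under eq_integral do rewrite -sumEFin.
rewrite ge0_integral_sum // => [|i]; last exact/measurable_EFinP/measurable_indic.
rewrite -sumEFin; apply: eq_bigr => i _.
by rewrite integral_indic // setIT fineK // fin_num_measure.
Qed.

Lemma sum_prob_le (M : nat) (E F : nat -> set T) (C : R) :
  (forall i, measurable (E i)) -> (forall i, measurable (F i)) -> 0 <= C ->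
  (forall w, \sum_(i < M) \1_(E i) w <= C + \sum_(i < M) \1_(F i) w) ->
  \sum_(i < M) fine (P (E i)) <= C + \sum_(i < M) fine (P (F i)).
Proof.
move=> mE mF C_ge0 EF; rewrite -lee_fin -integral_sum_indic // EFinD.
rewrite -[C%:E]mule1 -(probability_setT P) -integral_cst // -integral_sum_indic //.
rewrite -ge0_integralD //; last 2 first.
- by move=> w _; rewrite lee_fin sumr_ge0.
- exact/measurable_EFinP/measurable_sum_indic.
apply: ge0_le_integral => //.
- by move=> w _; rewrite lee_fin sumr_ge0.
- exact/measurable_EFinP/measurable_sum_indic.
- apply: emeasurable_funD; first exact: measurable_cst.
  exact/measurable_EFinP/measurable_sum_indic.
- by move=> w _; rewrite -EFinD lee_fin.
Qed.
End IndicatorSums.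

Section BlockFrequency.
Variables (R : realType) (d : measure_display) (T : measurableType d)
  (P : probability T R) (A : finType) (X : int -> T -> A).
Hypothesis mX : forall (t : int) (a : A), measurable [set w | X t w = a].
Hypothesis stat : stationary P X.
Variables (k : nat) (b : k.-tuple A).

Local Notation path := (path_of X).

Definition occurrence_event i := path @^-1` [set x | occurs_at b x i].
Definition sparse_event N c i := path @^-1` [set x | sparse_start (occurs_at b x) N c i].
Definition non_sparse_event N c i :=
  path @^-1` [set x | ~~ sparse_start (occurs_at b x) N c i].

Lemma measurable_occurrence_event i : measurable (occurrence_event i).
Proof.
exact: (measurable_determined mX (@determined_occurs_at _ _ b i)).
Qed.

Lemma measurable_sparse_event N c i : measurable (sparse_event N c i).
Proof.
exact: (measurable_determined mX (@determined_sparse_start _ _ b i N c id)).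
Qed.

Lemma measurable_non_sparse_event N c i : measurable (non_sparse_event N c i).
Proof.
exact: (measurable_determined mX (@determined_sparse_start _ _ b i N c negb)).
Qed.

Lemma occurrence_event_stationary i : P (occurrence_event i) = P (occurrence_event 0).
Proof.
rewrite -(stationary_determined mX stat i (@determined_occurs_at _ _ b 0)).
by congr (P _); apply/seteqP; split=> w /=; rewrite occurs_at_shift add0r.
Qed.

Lemma non_sparse_event_stationary N c i :
  P (non_sparse_event N c i) = P (non_sparse_event N c 0).
Proof.
rewrite -(stationary_determined mX stat i (@determined_sparse_start _ _ b 0 N c negb)).
by congr (P _); apply/seteqP; split=> w /=; rewrite occurs_at_shift sparse_start_shift add0r.
Qed.

Lemma covering_bound N c M : (0 < c)%N ->
  M%:R * fine (P (occurrence_event 0)) <=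
  (2 * (M + N))%:R / c%:R + M%:R * fine (P (non_sparse_event N c 0)) :> R.
Proof.
move=> c_gt0; have c_pos : 0 < c%:R :> R by rewrite ltr0n.
have sum_const (E : int -> set T) : (forall i, P (E i) = P (E 0)) ->
    \sum_(i < M) fine (P (E i%:Z)) = M%:R * fine (P (E 0)).
  by move=> EP; under eq_bigr do rewrite EP; rewrite sumr_const card_ord mulr_natl.
rewrite -!sum_const; [|exact: non_sparse_event_stationary|exact: occurrence_event_stationary].
apply: (sum_prob_le P (E := fun i => occurrence_event i%:Z)
  (F := fun i => non_sparse_event N c i%:Z)) => [i|i||w]; rewrite ?divr_ge0 //.
- exact: measurable_occurrence_event.
- exact: measurable_non_sparse_event.
rewrite (@sum_indic_window_count _ R (fun w i => occurs_at b (path w) i)).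
rewrite (@sum_indic_window_count _ R
  (fun w i => ~~ sparse_start (occurs_at b (path w)) N c i)).
rewrite -(ler_pM2l c_pos) mulrDr mulrCA mulfV ?gt_eqF // mulr1 -!natrM -natrD ler_nat.
exact: sparse_covering.
Qed.

Local Notation infrequent_event c :=
  (path @^-1` [set x | infrequent (occurs_at b x) c]).

Lemma non_sparse_event_small c : P (infrequent_event c) = 1%E ->
  forall e : R, 0 < e -> exists N, fine (P (non_sparse_event N c 0)) < e.
Proof.
move=> inf1 e e_gt0.
have mU : measurable (\bigcup_N sparse_event N c 0).
  by apply: bigcupT_measurable => N; exact: measurable_sparse_event.
have U1 : P (\bigcup_N sparse_event N c 0) = 1%E.
  apply/eqP; rewrite eq_le probability_le1 //= -inf1 le_measure ?inE //.
    exact: (measurable_path_preimage mX (path_measurable_infrequent b c)).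
  by move=> w /infrequent_sparse_start[N sN]; exists N.
have : (fun N => P (sparse_event N c 0)) @ \oo --> 1%E.
  rewrite -U1.
  apply: (@nondecreasing_cvg_mu _ _ _ P _ (fun N => measurable_sparse_event N c 0) mU).
  by move=> N N' NN'; apply/asboolP => w; exact: sparse_start_le.
move/fine_cvgP => [_ /(cvgrPdist_lt _ _).1 /(_ e e_gt0) [N _ NP]]; exists N.
have -> : non_sparse_event N c 0 = ~` sparse_event N c 0.
  by apply/seteqP; split=> w /= /negP.
have mS := measurable_sparse_event N c 0.
rewrite probability_setC // fineB ?fin_num_measure //=.
exact: le_lt_trans (ler_norm _) (NP N (leqnn N)).
Qed.

Hypothesis erg : ergodic P X.

Lemma infrequent_event_null c :
  8 < c%:R * fine (P (occurrence_event 0)) -> P (infrequent_event c) = 0%E.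
Proof.
set p := fine _ => cp8.
have c_gt0 : (0 < c)%N.
  by rewrite lt0n; apply: contraTneq cp8 => ->; rewrite mul0r -leNgt; lra.
have c_pos : 0 < c%:R :> R by rewrite ltr0n.
have p_gt0 : 0 < p by rewrite -(pmulr_rgt0 _ c_pos); apply: lt_trans cp8.
have [//|/non_sparse_event_small small] :=
  erg (path_measurable_infrequent b c) (shift_infrequent b c).
have [N qN] := small (p / 4) ltac:(by rewrite divr_gt0).
have := covering_bound N N.+1 c_gt0; rewrite -/p; set q := fine _ in qN *.
set M := N.+1%:R; have M_pos : 0 < M by rewrite ltr0n.
have Mq : M * q <= M * (p / 4) by rewrite ler_wpM2l ?ltW.
have C4 : (2 * (N.+1 + N))%:R / c%:R <= M * (4 / c%:R).
  by rewrite mulrA ler_wpM2r ?invr_ge0 // -natrM ler_nat; lia.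
move=> /le_trans/(_ (lerD C4 Mq)); rewrite -mulrDr ler_pM2l // => p_bound; exfalso.
have := ler_wpM2l (ltW c_pos) p_bound; rewrite mulrDr mulrCA mulfV ?gt_eqF // mulr1.
nra.
Qed.

Lemma absent_or_dense_ae : {ae P, forall w, absent_or_dense (occurs_at b (path w))}.
Proof.
have [p0|p_neq0] := eqVneq (P (occurrence_event 0)) 0%E.
  have null_occ : P.-negligible (\bigcup_(i : nat) occurrence_event i%:Z).
    apply: negligible_bigcup => i; exists (occurrence_event i%:Z); split=> //.
      exact: measurable_occurrence_event.
    exact: etrans (occurrence_event_stationary _) p0.
  apply: negligibleS null_occ => w /= not_absent; apply: contrapT => no_occ.
  by apply: not_absent; left => i; apply/negP => occ_i; apply: no_occ; exists i.
set p := fine (P (occurrence_event 0)).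
have p_gt0 : 0 < p.
  rewrite fine_gt0 // lt0e p_neq0 measure_ge0 ltey_eq fin_num_measure //.
  exact: measurable_occurrence_event.
set c := Num.Def.archi_bound (8 / p).
have cp8 : 8 < c%:R * p.
  by rewrite -ltr_pdivrMr // archi_boundP // divr_ge0 // ltW.
exists (infrequent_event c); split.
- exact: (measurable_path_preimage mX (path_measurable_infrequent b c)).
- exact: infrequent_event_null.
move=> w /= not_dense; apply: contrapT => not_inf; apply: not_dense; right.
by exists c; apply: not_infrequent_dense.
Qed.

End BlockFrequency.

Section Kappa.
Local Open Scope nat_scope.
Variable A : finType.

Definition last_block (x : int -> A) n k : k.-tuple A :=
  [tuple x ((n.+1 - k)%:Z + i%:Z)%R | i < k].

Lemma occurs_at_last_block x n k : occurs_at (last_block x n k) x (n.+1 - k)%:Z.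
Proof. by apply/forallP => i; rewrite tnth_mktuple. Qed.

(* Lag t in [occ_count] is an occurrence of the last block at position n + 1 - k - t. *)
Lemma occ_count_last_block x n k : k <= n.+1 ->
  occ_count x n k = window_count (occurs_at (last_block x n k) x) 0 (n.+1 - k).
Proof.
move=> kn; rewrite /occ_count /window_count (_ : n + 2 - k = (n.+1 - k).+1); last by lia.
rewrite big_add1 big_nat_rev big_mkord; apply: eq_bigr => l _.
have := ltn_ord l; rewrite /= => lk; congr (nat_of_bool _).
by apply: eq_forallb => i; rewrite tnth_mktuple; congr (x _ == x _); lia.
Qed.

Lemma kappa_unbounded (K J : nat -> nat) x :
  (forall M, exists N, forall n, N <= n -> M <= K n) ->
  (forall c, exists N, forall n, N <= n -> J n * c <= n) ->
  (forall k (b : k.-tuple A), absent_or_dense (occurs_at b x)) ->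
  forall M, exists N, forall n, N <= n -> M <= kappa K J x n.
Proof.
move=> K_unbounded J_sublin dense [|k]; first by exists 0.
have [Nb Nb_P] := fin_all_exists (fun b : k.+1.-tuple A =>
  dense_hits_eventually k.+1 J_sublin (dense _ b)).
have [NK NK_P] := K_unbounded k.+1.
exists (\max_b Nb b + NK + k.+1) => n Nn.
have kK : k.+1 < (K n).+1 by rewrite ltnS NK_P //; lia.
apply: (leq_bigmax_cond (F := fun i : 'I_(K n).+1 => nat_of_ord i) (Ordinal kK)) => /=.
rewrite occ_count_last_block; last by lia.
apply: Nb_P; last exact: occurs_at_last_block.
by apply: leq_trans (leq_bigmax _) _; lia.
Qed.

End Kappa.

Lemma sublinear_of_ratio_cvg0 (R : realType) (J : nat -> nat) :
  ((J n)%:R / n%:R : R) @[n --> \oo] --> 0 ->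
  forall c, exists N, forall n, (N <= n)%N -> (J n * c <= n)%N.
Proof.
move=> J_ratio c; have c_pos : (0 : R) < 1 / c.+1%:R by rewrite divr_gt0 ?ltr0n.
have [N _ NP] := (cvgrPdist_lt _ _).1 J_ratio _ c_pos.
exists N.+1 => n Nn; have n_pos : (0 : R) < n%:R by rewrite ltr0n; lia.
have := NP n (ltnW Nn); rewrite /= sub0r normrN ger0_norm ?divr_ge0 //.
rewrite ltr_pdivrMr // div1r mulrC ltr_pdivlMr ?ltr0n // -natrM ltr_nat.
by move=> /ltnW; apply: leq_trans; rewrite leq_mul2l leqnSn orbT.
Qed.

Theorem lemma2 (R : realType) (d : measure_display) (T : measurableType d)
  (P : probability T R) (A : finType) (X : int -> T -> A)
  (K J : nat -> nat) :
  (forall (t : int) (a : A), measurable [set w | X t w = a]) ->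
  stationary P X -> ergodic P X ->
  (forall n, (1 <= K n)%N) -> (forall n, (1 <= J n)%N) ->
  (forall m n, (m <= n)%N -> (K m <= K n)%N) ->
  (forall m n, (m <= n)%N -> (J m <= J n)%N) ->
  (forall M, exists N, forall n, (N <= n)%N -> (M <= K n)%N) ->
  (forall M, exists N, forall n, (N <= n)%N -> (M <= J n)%N) ->
  ((J n)%:R / n%:R : R) @[n --> \oo] --> 0 ->
  {ae P, forall w, forall M : nat, exists N : nat, forall n : nat,
      (N <= n)%N -> (M <= kappa K J (path_of X w) n)%N}.
Proof.
move=> mX stat erg _ _ _ _ K_unbounded _ /sublinear_of_ratio_cvg0 J_sublin.
have all_dense :
    {ae P, forall w k (b : k.-tuple A), absent_or_dense (occurs_at b (path_of X w))}.
  apply: ae_foralln => k; apply: filter_forall => b.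
  exact: (absent_or_dense_ae mX stat b erg).
by apply: filterS all_dense => w; exact: kappa_unbounded.
Qed.
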